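(* Let $(X, A, \rightarrow)$ be a labelled transition system with finite state set $X$ and a distinguished silent action $\tau \in A$. In the branching bisimulation game on this LTS, the winning region $\mathcal{W}_S$ of Spoiler is the least set $W$ such that $\lozenge_{S,1} \Box_D \lozenge_{S,2} W \subseteq W$.
   Context: Write $x \Longrightarrow x'$ if there is a (possibly empty) sequence of $\tau$-transitions from $x$ to $x'$, and $x \xrightarrow{(\alpha)} x'$ if either $x \xrightarrow{\alpha} x'$, or $\alpha = \tau$ and $x = x'$. Branching bisimulation game: Spoiler configurations are $C_S = X^2 \cup X^5$, written $[x,y]$ and $[x,x',y,y',y'']$; Duplicator configurations are $C_D = X \times A \times X \times X$, written $\langle x,\alpha,x',y\rangle$. Spoiler moves: $\rightarrow_{S,1} \subseteq X^2 \times C_D$ consists of moves from $[x,y]$ to $\langle x,\alpha,x',y\rangle$ if $x \xrightarrow{\alpha} x'$, and from $[x,y]$ to $\langle y,\alpha,y',x\rangle$ if $y \xrightarrow{\alpha} y'$; $\rightarrow_{S,2} \subseteq X^5 \times X^2$ consists of moves from $[x,x',y,y',y'']$ to $[x,y']$ or to $[x',y'']$. Duplicator moves $\rightarrow_D$: from $\langle x,\alpha,x',y\rangle$ to $[x,x',y,y',y'']$ if $y \Longrightarrow y' \xrightarrow{(\alpha)} y''$. A play from $[x,y]$ is a finite or infinite sequence of configurations starting at $[x,y]$, each next one a move from the previous; it is maximal if infinite or no move is possible from its last configuration. Spoiler wins a finite maximal play iff its last configuration is a Duplicator configuration; all other maximal plays are won by Duplicator. A (positional) Spoiler strategy maps each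 Spoiler configuration to a Spoiler move from it; a play is consistent with it if all Spoiler moves in the play follow the strategy; it is winning from $[x,y]$ if all maximal plays from $[x,y]$ consistent with it are won by Spoiler. $\mathcal{W}_S$ is the set of configurations $[x,y] \in X^2$ from which Spoiler has a winning strategy. Modalities: for a move relation $\rightarrow_R$ and a set $W$ of configurations, $\lozenge_R W = \{c \mid \exists c'.\ c \rightarrow_R c' \wedge c' \in W\}$ and $\Box_R W = \{c \mid \forall c'.\ c \rightarrow_R c' \Rightarrow c' \in W\}$, where $c$ ranges over the source configurations of $\rightarrow_R$ (i.e. $X^2$ for $\rightarrow_{S,1}$, $C_D$ for $\rightarrow_D$, $X^5$ for $\rightarrow_{S,2}$). *)

From mathcomp Require Import all_boot.
Set Implicit Arguments. Unset Strict Implicit. Unset Printing Implicit Defensive.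

Section BranchingGame.
Context (X : finType) (A : Type) (tau : A) (trans : X -> A -> X -> Prop).

Inductive tau_star : X -> X -> Prop :=
| tau_refl x : tau_star x x
| tau_step x x' x'' : trans x tau x' -> tau_star x' x'' -> tau_star x x''.

Definition opt_step (x : X) (a : A) (x' : X) : Prop :=
  trans x a x' \/ (a = tau /\ x = x').

(* Spoiler configurations X^2 and X^5, Duplicator configurations X*A*X*X. *)
Definition C2 := (X * X)%type.
Definition C5 := (X * X * X * X * X)%type.
Definition CD := (X * A * X * X)%type.

Definition moveS1 (c : C2) (d : CD) : Prop :=
  let '(x, y) := c in
  exists (a : A) (z : X),
    (d = (x, a, z, y) /\ trans x a z) \/ (d = (y, a, z, x) /\ trans y a z).

Definition moveD (d : CD) (f : C5) : Prop :=
  let '(x, a, x', y) := d in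
  exists y' y'', f = (x, x', y, y', y'') /\ tau_star y y' /\ opt_step y' a y''.

Definition moveS2 (f : C5) (c : C2) : Prop :=
  let '(x, x', y, y', y'') := f in c = (x, y') \/ c = (x', y'').

Definition dia {S T : Type} (R : S -> T -> Prop) (W : T -> Prop) : S -> Prop :=
  fun c => exists c', R c c' /\ W c'.
Definition box {S T : Type} (R : S -> T -> Prop) (W : T -> Prop) : S -> Prop :=
  fun c => forall c', R c c' -> W c'.

Inductive conf : Type :=
| Conf2 of C2
| Conf5 of C5
| ConfD of CD.

Definition move (c c' : conf) : Prop :=
  match c, c' with
  | Conf2 p, ConfD d => moveS1 p d
  | ConfD d, Conf5 f => moveD d f
  | Conf5 f, Conf2 p => moveS2 f p
  | _, _ => False
  end.

Definition is_spoiler (c : conf) : Prop :=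
  match c with ConfD _ => False | _ => True end.

Definition spoiler_strategy (s : conf -> conf) : Prop :=
  forall c, is_spoiler c -> (exists c', move c c') -> move c (s c).

(* Finite play p 0, ..., p n from c0 (values of p beyond n are irrelevant). *)
Definition finite_play (c0 : conf) (p : nat -> conf) (n : nat) : Prop :=
  p 0 = c0 /\ forall i, i < n -> move (p i) (p i.+1).
Definition finite_maximal_play (c0 : conf) (p : nat -> conf) (n : nat) : Prop :=
  finite_play c0 p n /\ ~ (exists c', move (p n) c').
Definition finite_consistent (s : conf -> conf) (p : nat -> conf) (n : nat) : Prop :=
  forall i, i < n -> is_spoiler (p i) -> p i.+1 = s (p i).

Definition infinite_play (c0 : conf) (p : nat -> conf) : Prop :=
  p 0 = c0 /\ forall i, move (p i) (p i.+1).
Definition infinite_consistent (s : conf -> conf) (p : nat -> conf) : Prop :=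
  forall i, is_spoiler (p i) -> p i.+1 = s (p i).

(* s is winning from c0: all maximal plays from c0 consistent with s are won
   by Spoiler, i.e. there is no consistent infinite play (those are won by
   Duplicator) and every consistent finite maximal play ends in a Duplicator
   configuration. *)
Definition winning_from (s : conf -> conf) (c0 : conf) : Prop :=
  (forall p, infinite_play c0 p -> infinite_consistent s p -> False) /\
  (forall p n, finite_maximal_play c0 p n -> finite_consistent s p n ->
     ~ is_spoiler (p n)).

Definition W_S : C2 -> Prop :=
  fun xy => exists s, spoiler_strategy s /\ winning_from s (Conf2 xy).

Definition F (W : C2 -> Prop) : C2 -> Prop :=
  dia moveS1 (box moveD (dia moveS2 W)).

End BranchingGame.

(** The winning region is sandwiched between two fixed-point arguments.
    If [W] is closed under [F], then the complement of [W], lifted to all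
    configurations, is a trap for Spoiler: every Spoiler move stays in it and
    Duplicator can always stay in it, so no Spoiler strategy wins from outside
    [W]; hence [W_S] lies below every pre-fixed point.  Conversely, let
    [won_within k] be the Kleene approximants of the least fixed point.  Because
    [X] is finite, a Duplicator configuration has only finitely many
    successors, so their union is itself closed under [F].  From a position of
    rank [k], the positional strategy that always moves to a successor of
    least rank wins, since the rank strictly decreases along every play
    consistent with it.  Together, [F W_S] lies below [F] of the union, hence
    below the union, hence below [W_S]. *)

From mathcomp Require Import all_boot zify.
From Stdlib Require Import Classical ClassicalEpsilon.
From Stdlib Require Wf_nat.

Set Implicit Arguments. Unset Strict Implicit. Unset Printing Implicit Defensive.

Lemma dia_mono (S T : Type) (R : S -> T -> Prop) (W1 W2 : T -> Prop) :
  (forall t, W1 t -> W2 t) -> forall s, dia R W1 s -> dia R W2 s.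
Proof. by move=> W12 s [t [Rst W1t]]; exists t; split; last exact: W12. Qed.

Lemma box_mono (S T : Type) (R : S -> T -> Prop) (W1 W2 : T -> Prop) :
  (forall t, W1 t -> W2 t) -> forall s, box R W1 s -> box R W2 s.
Proof. by move=> W12 s W1s t Rst; apply/W12/W1s. Qed.

Lemma fin_uniform_bound (T : finType) (P : T -> nat -> Prop) :
  (forall t k m, k <= m -> P t k -> P t m) ->
  (forall t, exists k, P t k) -> exists K, forall t, P t K.
Proof.
move=> Pmono /fin_all_exists[k Pk]; exists (\max_t k t) => t.
exact: Pmono (leq_bigmax t) (Pk t).
Qed.

Lemma exists_least_witness (T : Type) (R : T -> Prop) (Q : nat -> T -> Prop) :
  (forall j m t, j <= m -> Q j t -> Q m t) -> (exists t, R t) ->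
  exists t, R t /\ forall j t', R t' -> Q j t' -> Q j t.
Proof.
move=> Qmono [t0 Rt0].
have [[j [t [Rt Qjt]]]|none] := classic (exists j t, R t /\ Q j t); last first.
  by exists t0; split=> // j t Rt Qjt; case: none; exists j, t.
have [j0 [[[t1 [Rt1 Qt1]] j0_min] _]] :=
  @Wf_nat.dec_inh_nat_subset_has_unique_least_element
    (fun j => exists t, R t /\ Q j t) (fun j => classic _)
    (ex_intro _ j (ex_intro _ t (conj Rt Qjt))).
exists t1; split=> // j' t' Rt' Qt'.
by apply: Qmono Qt1; apply/leP/j0_min; exists t'.
Qed.

Section BranchingGameRegion.
Context (X : finType) (A : Type) (tau : A) (trans : X -> A -> X -> Prop).

Local Notation conf := (conf X A).
Local Notation move := (@move X A tau trans).
Local Notation moveD := (@moveD X A tau trans).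
Local Notation F := (F tau trans).
Local Notation W_S := (W_S tau trans).
Local Notation winning_from := (winning_from tau trans).
Local Notation spoiler_strategy := (spoiler_strategy tau trans).

Lemma F_mono (W1 W2 : C2 X -> Prop) :
  (forall q, W1 q -> W2 q) -> forall q, F W1 q -> F W2 q.
Proof. by move=> W12; apply: dia_mono; apply: box_mono; apply: dia_mono. Qed.

Lemma trap_not_winning (s : conf -> conf) (Inv : conf -> Prop) (c0 : conf) :
  spoiler_strategy s ->
  (forall c c', Inv c -> is_spoiler c -> move c c' -> Inv c') ->
  (forall d, Inv (ConfD d) -> exists c', move (ConfD d) c' /\ Inv c') ->
  Inv c0 -> ~ winning_from s c0.
Proof.
move=> s_ok spoiler_stays dup_stays Ic0 [no_infinite finite_ends_D].
pose step c := if c is ConfD _ then epsilon (inhabits c) (fun c' => move c c' /\ Inv c')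
               else s c.
pose p i := iter i step c0.
have consistent i : is_spoiler (p i) -> p i.+1 = s (p i).
  by rewrite /= -/(p i); case: (p i).
have spoiler_step c : Inv c -> is_spoiler c ->
    (~ exists c', move c c') \/ (move c (s c) /\ Inv (s c)).
  move=> Ic sp; have [ex_move|] := classic (exists c', move c c'); last by left.
  by right; have m := s_ok _ sp ex_move; split; last exact: spoiler_stays m.
have step_spec c : Inv c ->
    (is_spoiler c /\ ~ exists c', move c c') \/ (move c (step c) /\ Inv (step c)).
  case: c => [q|f|d] Ic.
  1-2: by case: (spoiler_step _ Ic I); [left | right].
  by right; apply: (epsilon_spec _ (fun c' => move (ConfD d) c' /\ Inv c')); apply: dup_stays.
have play i : Inv (p i) /\ forall j, j < i -> move (p j) (p j.+1).
  elim: i => [|i [Ipi moves]]; first by [].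
  case: (step_spec _ Ipi) => [[sp stuck]|[m Ipi']].
    by case: (finite_ends_D p i) => // j _; apply: consistent.
  by split=> // j; rewrite ltnS leq_eqVlt => /orP[/eqP->|/moves].
by apply: (no_infinite p) => //; split=> // i; exact: (play i.+1).2 i (ltnSn i).
Qed.

Lemma ranking_winning (s : conf -> conf) (R : nat -> conf -> Prop) n (c0 : conf) :
  (forall n c, R n c -> is_spoiler c -> exists c', move c c') ->
  (forall n c c', R n c -> move c c' -> (is_spoiler c -> c' = s c) ->
     exists2 m, m < n & R m c') ->
  R n c0 -> winning_from s c0.
Proof.
move=> has_move decreases Rc0; split.
- move=> p [p0 moves] consistent.
  have bound i : exists2 m, m + i <= n & R m (p i).
    elim: i => [|i [m le_n Rm]]; first by exists n; rewrite ?addn0 ?p0.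
    have [m' lt_m Rm'] := decreases _ _ _ Rm (moves i) (consistent i).
    by exists m' => //; lia.
  by have [m] := bound n.+1; lia.
- move=> p k [[p0 moves] stuck] consistent sp_k.
  have ranked i : i <= k -> exists m, R m (p i).
    elim: i => [|i IH] le_ik; first by exists n; rewrite p0.
    have [m Rm] := IH (ltnW le_ik).
    by have [m' _ Rm'] := decreases _ _ _ Rm (moves i le_ik) (consistent i le_ik); exists m'.
  by have [m Rm] := ranked k (leqnn k); apply/stuck/(has_move _ _ Rm).
Qed.

Definition lift_region (W : C2 X -> Prop) (c : conf) : Prop :=
  match c with
  | Conf2 q => W q
  | Conf5 f => dia (@moveS2 X) W f
  | ConfD d => box moveD (dia (@moveS2 X) W) d
  end.

Lemma lift_region_mono (W1 W2 : C2 X -> Prop) :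
  (forall q, W1 q -> W2 q) -> forall c, lift_region W1 c -> lift_region W2 c.
Proof.
move=> W12 [q|f|d] /=; first exact: W12; first exact: dia_mono.
by apply: box_mono; apply: dia_mono.
Qed.

Lemma W_S_least (W : C2 X -> Prop) :
  (forall q, F W q -> W q) -> forall q, W_S q -> W q.
Proof.
move=> W_closed q [s [s_ok s_wins]]; apply: NNPP => Wq.
apply: (@trap_not_winning s (fun c => ~ lift_region W c) (Conf2 A q)) s_wins => //.
- move=> [q1|f|//] [q2|f2|d] out _ m in' //; apply: out.
  + by apply: W_closed; exists d.
  + by exists q2.
- move=> d out_d.
  have [f out_f] := not_all_ex_not _ _ out_d.
  have [m out] := imply_to_and _ _ out_f.
  by exists (Conf5 A f).
Qed.

Fixpoint won_within (k : nat) : C2 X -> Prop :=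
  if k is k'.+1 then F (won_within k') else fun _ => False.

Lemma won_within_mono k m q : k <= m -> won_within k q -> won_within m q.
Proof.
elim: m k q => [|m IH] [|k] q //= le_km.
by apply: F_mono => q'; apply: IH.
Qed.

Definition won_eventually (q : C2 X) : Prop := exists k, won_within k q.

Lemma won_eventually_F_closed q : F won_eventually q -> won_eventually q.
Proof.
case=> [[[[x a] x'] y] [m1 succ_won]].
pose P (t : X * X) k := moveD (x, a, x', y) (x, x', y, t.1, t.2) ->
                        dia (@moveS2 X) (won_within k) (x, x', y, t.1, t.2).
have P_mono t k m : k <= m -> P t k -> P t m.
  by move=> le_km Ptk /Ptk; apply: dia_mono => q'; exact: won_within_mono.
have P_ex t : exists k, P t k.
  have [mD|no_mD] := classic (moveD (x, a, x', y) (x, x', y, t.1, t.2)); last first.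
    by exists 0 => /no_mD.
  by have [q' [mq [k wk]]] := succ_won _ mD; exists k => _; exists q'.
have [K PK] := fin_uniform_bound P_mono P_ex.
exists K.+1, (x, a, x', y); split=> // f mD.
by case: (mD) => y1 [y2 [f_eq _]]; move: mD; rewrite f_eq; apply: (PK (y1, y2)).
Qed.

Definition level (k : nat) : conf -> Prop := lift_region (won_within k).

(* Counts moves rather than rounds, so that every consistent move lowers it. *)
Definition weight (c : conf) (k : nat) : nat :=
  match c with Conf2 _ => 3 * k | Conf5 _ => 3 * k + 1 | ConfD _ => 3 * k + 2 end.

Lemma level_mono j m c : j <= m -> level j c -> level m c.
Proof. by move=> le_jm; apply: lift_region_mono => q; apply: won_within_mono. Qed.

Definition least_level_move (c c' : conf) : Prop :=
  move c c' /\ forall j c'', move c c'' -> level j c'' -> level j c'.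

Definition least_level_strategy (c : conf) : conf :=
  epsilon (inhabits c) (least_level_move c).

Lemma least_level_strategyP c :
  (exists c', move c c') -> least_level_move c (least_level_strategy c).
Proof. by move/(exists_least_witness level_mono); apply: epsilon_spec. Qed.

Lemma least_level_strategy_spoiler : spoiler_strategy least_level_strategy.
Proof. by move=> c _ /least_level_strategyP[]. Qed.

Lemma level_has_move k c : level k c -> is_spoiler c -> exists c', move c c'.
Proof.
case: c => [q|[[[[x x'] y] y'] y'']|//] lvl _.
- by case: k lvl => [|k] // [d [m _]]; exists (ConfD d).
- by exists (Conf2 A (x, y')); left.
Qed.

Lemma level_decreases k c c' :
  level k c -> move c c' -> (is_spoiler c -> c' = least_level_strategy c) ->
  exists k', level k' c' /\ weight c' k' < weight c k.
Proof.
move=> lvl m consistent.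
have least j c'' : is_spoiler c -> move c c'' -> level j c'' -> level j c'.
  by move=> sp; rewrite (consistent sp); apply: (least_level_strategyP (ex_intro _ c' m)).2.
case: c lvl m {consistent} least => [q|f|d] lvl m least.
- case: k lvl => [|k] // [d [md Bd]]; exists k; split; first exact: (least _ (ConfD d)) I md Bd.
  by case: c' m {least} => // *; rewrite /weight; lia.
- case: lvl => q [mq wq]; exists k; split; first exact: (least _ (Conf2 A q)) I mq wq.
  by case: c' m {least} => // *; rewrite /weight; lia.
- by case: c' m {least} => // f m; exists k; split; [exact: lvl | rewrite /weight; lia].
Qed.

Lemma won_eventually_W_S q : won_eventually q -> W_S q.
Proof.
case=> k wk; exists least_level_strategy; split; first exact: least_level_strategy_spoiler.
apply: (@ranking_winning _ (fun n c => exists k, level k c /\ weight c k = n) (3 * k)).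
- by move=> n c [k' [lvl _]]; apply: level_has_move lvl.
- move=> n c c' [k' [lvl <-]] m consistent.
  have [k'' [lvl' lt_w]] := level_decreases lvl m consistent.
  by exists (weight c' k'') => //; exists k''.
- by exists k.
Qed.

End BranchingGameRegion.

Theorem proposition2 (X : finType) (A : Type) (tau : A)
    (trans : X -> A -> X -> Prop) :
  (forall xy, F tau trans (W_S tau trans) xy -> W_S tau trans xy) /\
  (forall W : C2 X -> Prop,
      (forall xy, F tau trans W xy -> W xy) ->
      forall xy, W_S tau trans xy -> W xy).
Proof.
split; last exact: W_S_least.
move=> xy F_W_S; apply/won_eventually_W_S/won_eventually_F_closed.
by move: F_W_S; apply: F_mono; apply: W_S_least; apply: won_eventually_F_closed.
Qed.
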